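(* Let $p$ be a prime, $n=rk$, let $h:\mathbb{F}_{p^k}\to\mathbb{F}_{p^k}$ be an arbitrary mapping, and let $\gamma\in\mathbb{F}_{p^n}^*$ be an $(i,b)$-Frobenius translator of $f:\mathbb{F}_{p^n}\to\mathbb{F}_{p^k}$ (with $b\in\mathbb{F}_{p^k}$, $i\in\{0,\dots,k-1\}$). Let $L:\mathbb{F}_{p^n}\to\mathbb{F}_{p^n}$ be an $\mathbb{F}_{p^k}$-linear permutation. Then the mapping $$G(x)=L(x)^{p^i}+L(\gamma)^{p^i}\,h(f(x))$$ permutes $\mathbb{F}_{p^n}$ if and only if the mapping $g(u)=u+bh(u)$ permutes $\mathbb{F}_{p^k}$.
   Context: For $n=rk$, a function $f:\mathbb{F}_{p^n}\to\mathbb{F}_{p^k}$, an element $\gamma\in\mathbb{F}_{p^n}^*$, an element $b\in\mathbb{F}_{p^k}$ and $i\in\{0,\dots,k-1\}$, $\gamma$ is called an $(i,b)$-Frobenius translator of $f$ if $f(x+u\gamma)-f(x)=u^{p^i}b$ for all $x\in\mathbb{F}_{p^n}$ and all $u\in\mathbb{F}_{p^k}$. An $\mathbb{F}_{p^k}$-linear function on $\mathbb{F}_{p^n}$ is one of the form $L(x)=\sum_{j=0}^{r-1}\lambda_j x^{p^{kj}}$ with $\lambda_j\in\mathbb{F}_{p^n}$. *)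

From HB Require Import structures.
From mathcomp Require Import all_boot all_order all_algebra all_field.
Set Implicit Arguments. Unset Strict Implicit. Unset Printing Implicit Defensive.
Import GRing.Theory.
Local Open Scope ring_scope.

(* F plays the role of F_{p^n}; the subfield F_{p^k} is realized as the set of
   fixed points of x |-> x^(p^k) inside F (when k | n this is exactly the
   unique subfield of order p^k). *)
Definition subF (F : finFieldType) (p k : nat) : pred F :=
  [pred x : F | x ^+ (p ^ k) == x].

Definition frobenius_translator (F : finFieldType) (p k : nat)
  (f : F -> F) (gamma b : F) (i : nat) : Prop :=
  gamma != 0 /\ b \in subF p k /\ (i < k)%N /\
  forall (x u : F), u \in subF p k ->
    f (x + u * gamma) - f x = u ^+ (p ^ i) * b.

Definition Fpk_linear (F : finFieldType) (p k r : nat) (L : F -> F) : Prop :=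
  exists lambda : 'I_r -> F,
    forall x : F, L x = \sum_(j < r) lambda j * x ^+ (p ^ (k * j)).

(* g permutes the subset A: maps A into A and is injective on A
   (equivalently bijective on the finite set A). *)
Definition permutes_on (F : finFieldType) (A : pred F) (g : F -> F) : Prop :=
  (forall u, u \in A -> g u \in A) /\ {in A &, injective g}.

(* As L is F_{p^k}-linear and x |-> x ^ p^i is additive and bijective,
   G x = G y forces x = y + u gamma with u in F_{p^k} and
   u ^ p^i = h (f y) - h (f x); the translator property then gives
   g (f x) = g (f y), so if g is injective then u = 0.  Conversely, along the
   line x + F_{p^k} gamma, b times the change of G is L gamma ^ p^i times the
   change of g o f, and for b != 0 the translator property makes f onto
   F_{p^k}, so a collision of g lifts to a collision of G (for b = 0, g is
   the identity). *)

From HB Require Import structures.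
From mathcomp Require Import all_boot all_order all_algebra all_field.
From mathcomp Require Import ring.
Import GRing.Theory.
Local Open Scope ring_scope.

Section Frobenius.

Context {F : finFieldType} {p : nat}.
Hypothesis pcharFp : p \in [pchar F].

Lemma pchar_pnat_expn (m : nat) : ([pchar F]).-nat (p ^ m)%N.
Proof.
rewrite (eq_pnat _ (pcharf_eq pcharFp)) pnatX.
by rewrite pnat_id ?(pcharf_prime pcharFp).
Qed.

Lemma exprDp m (x y : F) : (x + y) ^+ (p ^ m) = x ^+ (p ^ m) + y ^+ (p ^ m).
Proof. exact/exprDn_pchar/pchar_pnat_expn. Qed.

Lemma exprBp m (x y : F) : (x - y) ^+ (p ^ m) = x ^+ (p ^ m) - y ^+ (p ^ m).
Proof. by rewrite exprDp (exprNn_pchar _ (pchar_pnat_expn m)). Qed.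

Lemma exprp_inj m : injective (fun x : F => x ^+ (p ^ m)).
Proof.
move=> x y /= /eqP; rewrite -subr_eq0 -exprBp expf_eq0 subr_eq0.
by case/andP=> _ /eqP.
Qed.

Context {k : nat}.

Lemma subFD (x y : F) : x \in subF p k -> y \in subF p k -> x + y \in subF p k.
Proof. by rewrite !inE exprDp => /eqP-> /eqP->. Qed.

Lemma subFB (x y : F) : x \in subF p k -> y \in subF p k -> x - y \in subF p k.
Proof. by rewrite !inE exprBp => /eqP-> /eqP->. Qed.

Lemma subFM (x y : F) : x \in subF p k -> y \in subF p k -> x * y \in subF p k.
Proof. by rewrite !inE exprMn => /eqP-> /eqP->. Qed.

Lemma subFV (x : F) : x \in subF p k -> x^-1 \in subF p k.
Proof. by rewrite !inE exprVn => /eqP->. Qed.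

Lemma subF_exprM (u : F) j : u \in subF p k -> u ^+ (p ^ (k * j)) = u.
Proof.
rewrite inE => /eqP uS; elim: j => [|j IHj]; first by rewrite muln0 expr1.
by rewrite mulnS expnD exprM uS IHj.
Qed.

Lemma subF_exprp_root m (v : F) :
  v \in subF p k -> exists2 u, u \in subF p k & u ^+ (p ^ m) = v.
Proof.
move=> vS; have [root rootK frobK] := injF_bij (exprp_inj m).
exists (root v); last exact: frobK.
rewrite inE; apply/eqP/(exprp_inj m) => /=.
by rewrite -exprM mulnC exprM frobK (eqP vS).
Qed.

Lemma Fpk_linearDZ {r : nat} {L : F -> F} (x y u : F) :
  Fpk_linear p k r L -> u \in subF p k -> L (x + u * y) = L x + u * L y.
Proof.
move=> [lambda Lx] uS; rewrite !Lx mulr_sumr -big_split.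
apply: eq_bigr => j _ /=.
by rewrite exprDp exprMn (subF_exprM _ _ uS); ring.
Qed.

End Frobenius.

Section FrobeniusTranslator.

Context {F : finFieldType} {p k r i : nat} {f h L : F -> F} {gamma b : F}.
Hypothesis pcharFp : p \in [pchar F].
Hypothesis hS : forall u, u \in subF p k -> h u \in subF p k.
Hypothesis fS : forall x, f x \in subF p k.
Hypothesis gamma_neq0 : gamma != 0.
Hypothesis bS : b \in subF p k.
Hypothesis translator : forall x u, u \in subF p k ->
  f (x + u * gamma) - f x = u ^+ (p ^ i) * b.
Hypothesis L_lin : Fpk_linear p k r L.
Hypothesis L_inj : injective L.

Let G x := L x ^+ (p ^ i) + L gamma ^+ (p ^ i) * h (f x).
Let g u := u + b * h u.

Lemma translatorD x u :
  u \in subF p k -> f (x + u * gamma) = f x + u ^+ (p ^ i) * b.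
Proof. by move=> uS; rewrite -(translator x _ uS) subrKC. Qed.

Lemma translator_surj v : b != 0 -> v \in subF p k -> exists x, f x = v.
Proof.
move=> b_neq0 vS; have vbS : (v - f 0) / b \in subF p k.
  by apply: subFM; [apply: (subFB pcharFp) | apply: subFV].
have [w wS wE] := subF_exprp_root pcharFp i _ vbS.
exists (w * gamma).
by rewrite -[w * gamma]add0r translatorD // wE mulfVK // subrKC.
Qed.

Lemma shift_along_gamma x u : u \in subF p k ->
  b * (G (x + u * gamma) - G x) =
  L gamma ^+ (p ^ i) * (g (f (x + u * gamma)) - g (f x)).
Proof.
move=> uS; rewrite /G /g translatorD // (Fpk_linearDZ pcharFp _ _ _ L_lin uS).
by rewrite exprDp // exprMn; ring.
Qed.

Lemma G_fibre_on_line x y : G x = G y -> exists u,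
  [/\ u \in subF p k, u ^+ (p ^ i) = h (f y) - h (f x) & x = y + u * gamma].
Proof.
move=> Gxy; have cS : h (f y) - h (f x) \in subF p k.
  by apply: (subFB pcharFp); apply/hS/fS.
have [u uS uE] := subF_exprp_root pcharFp i _ cS.
exists u; split=> //; apply/L_inj/(exprp_inj pcharFp i) => /=.
rewrite (Fpk_linearDZ pcharFp _ _ _ L_lin uS) exprDp // exprMn uE.
by apply/eqP; rewrite -subr_eq0 -(subrr (G y)) -{1}Gxy /G; apply/eqP; ring.
Qed.

Lemma G_inj : {in subF p k &, injective g} -> injective G.
Proof.
move=> g_inj x y /G_fibre_on_line[u [uS uE xE]].
have fxE : f x = f y + u ^+ (p ^ i) * b by rewrite xE translatorD.
have fxy : f x = f y by apply: g_inj; rewrite ?fS // /g {1}fxE uE; ring.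
have /eqP : u ^+ (p ^ i) = 0 by rewrite uE fxy subrr.
by rewrite expf_eq0 => /andP[_ /eqP u0]; rewrite xE u0 mul0r addr0.
Qed.

Lemma g_inj_in : injective G -> {in subF p k &, injective g}.
Proof.
move=> G_inj u1 u2 u1S u2S g12; have [b0 | b_neq0] := eqVneq b 0.
  by move: g12; rewrite /g b0 !mul0r !addr0.
have [x fx] := translator_surj _ b_neq0 u1S.
have vS : (u2 - u1) / b \in subF p k.
  by apply: subFM; [apply: (subFB pcharFp) | apply: subFV].
have [u uS uE] := subF_exprp_root pcharFp i _ vS.
have fxu : f (x + u * gamma) = u2.
  by rewrite translatorD // fx uE mulfVK // subrKC.
have /G_inj/eqP : G (x + u * gamma) = G x.
  apply/eqP; move: (shift_along_gamma x _ uS); rewrite fxu fx g12 subrr mulr0.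
  by move/eqP; rewrite mulf_eq0 (negbTE b_neq0) subr_eq0.
rewrite -subr_eq0 addrC addKr mulf_eq0 (negbTE gamma_neq0) orbF => /eqP u0.
have /eqP : (u2 - u1) / b = 0.
  rewrite -uE u0 expr0n gtn_eqF //.
  by rewrite expn_gt0 prime_gt0 ?(pcharf_prime pcharFp).
by rewrite mulf_eq0 invr_eq0 (negbTE b_neq0) orbF subr_eq0 => /eqP.
Qed.

End FrobeniusTranslator.

Theorem theorem3 (p k r : nat) (F : finFieldType)
  (hp : prime p) (hk : (0 < k)%N) (hr : (0 < r)%N)
  (hchar : p \in [pchar F]) (hcard : #|F| = (p ^ (r * k))%N)
  (f h L : F -> F) (gamma b : F) (i : nat)
  (hf : forall x : F, f x \in subF p k)
  (hh : forall u : F, u \in subF p k -> h u \in subF p k)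
  (htr : frobenius_translator p k f gamma b i)
  (hLlin : Fpk_linear p k r L) (hLperm : bijective L) :
  bijective (fun x : F => L x ^+ (p ^ i) + L gamma ^+ (p ^ i) * h (f x))
  <-> permutes_on (subF p k) (fun u : F => u + b * h u).
Proof.
have [gamma_neq0 [bS [_ translator]]] := htr.
have L_inj := bij_inj hLperm.
split=> [/bij_inj G_inj | [_ g_inj]].
- split=> [u uS | ]; first by apply: (subFD hchar) => //; apply/subFM/hh.
  exact: (g_inj_in hchar hf gamma_neq0 bS translator hLlin G_inj).
- exact/injF_bij/(G_inj hchar hh hf translator hLlin L_inj).
Qed.
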